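(* Let $r,s$, $Q\subseteq[r]\times[s]$, homogeneous ideals $I\subseteq\mathbb{K}[x_1,\dots,x_r]$, $J\subseteq\mathbb{K}[y_1,\dots,y_s]$, and Gröbner bases $F$ of $I$ with respect to $\omega_1$ and $G$ of $J$ with respect to $\omega_2$ be given, such that every element of $F$ (resp. $G$) is weakly $Q$-homogeneous with respect to $\omega_1$ (resp. $\omega_2$). Let $\omega$ be a weight vector on $\mathbb{K}[z_{jk}:(j,k)\in Q]$ such that $H_Q$ is a Gröbner basis of $I_Q$ with respect to $\omega$. Then there exists $\epsilon>0$ such that $\operatorname{Lift}(F)\cup\operatorname{Lift}(G)\cup H_Q$ is a Gröbner basis of $I\times_QJ$ with respect to the weight $\omega'=(\omega_1,\omega_2)^TB_Q+\epsilon\omega$.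
   Context: $\phi_Q:\mathbb{K}[z_{jk}:(j,k)\in Q]\to\mathbb{K}[x,y]$ is $z_{jk}\mapsto x_jy_k$, $I_Q=\ker\phi_Q$, $B_Q$ is the $(r+s)\times\#Q$ matrix of exponent vectors of $\phi_Q$, and $I\times_QJ:=\phi_Q^{-1}(I+J)$. $G_Q$ is the bipartite graph on disjoint vertex sets $[r]$, $[s]$ with edge set $Q$; $H_Q$ is the set of binomials $\prod_{i=1}^\ell z_{j_ik_i}-\prod_{i=1}^\ell z_{j_{i+1}k_i}$ (indices mod $\ell$) for the induced cycles $j_1-k_1-\cdots-j_\ell-k_\ell-j_1$ of $G_Q$. Weak $Q$-homogeneity: a polynomial $f\in\mathbb{K}[x]$ homogeneous of total degree $d$ with $\omega_1$-leading monomial $x_{j_1}\cdots x_{j_d}$ is weakly $Q$-homogeneous w.r.t. $\omega_1$ if for every monomial $x_{j'_1}\cdots x_{j'_d}$ of $f$ there is a permutation $\sigma$ of $[d]$ with $\{(k_\ell)\in[s]^d:(j_\ell,k_\ell)\in Q\ \forall\ell\}\subseteq\{(k_\ell)\in[s]^d:(j'_{\sigma(\ell)},k_\ell)\in Q\ \forall\ell\}$; for $\mathbb{K}[y]$ swap the roles of the coordinates of $Q$. Lifts: write $f=\sum_\ell c_\ell x_{j_{\ell,1}}\cdots x_{j_{\ell,d}}$ with leading monomial $x_{j_{*,1}}\cdots x_{j_{*,d}}$ and monomials ordered so that $(j_{*,i},k_i)\in Q\ \forall i$ implies $(j_{\ell,i},k_i)\in Q\ \forall i,\ell$; for each $k\in[s]^d$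 with $(j_{*,i},k_i)\in Q$ for all $i$, $f_k=\sum_\ell c_\ell z_{j_{\ell,1}k_1}\cdots z_{j_{\ell,d}k_d}$; $\operatorname{Lift}(f)$ is the set of these and $\operatorname{Lift}(F)=\bigcup_{f\in F}\operatorname{Lift}(f)$; symmetrically for $\mathbb{K}[y]$. *)

From HB Require Import structures.
From mathcomp Require Import all_boot all_order all_algebra all_fingroup.
From mathcomp Require Import mpoly.

Set Implicit Arguments.
Unset Strict Implicit.
Unset Printing Implicit Defensive.

Import Order.TTheory GRing.Theory Num.Theory.
Local Open Scope ring_scope.

Section Defs.
Variables (K : fieldType) (R : realFieldType).

Definition ideal_gen n (S : {mpoly K[n]} -> Prop) : {mpoly K[n]} -> Prop :=
  fun p => exists l : seq ({mpoly K[n]} * {mpoly K[n]}),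
    (forall q, q \in l -> S q.2) /\ p = \sum_(q <- l) q.1 * q.2.

Definition homog_ideal n (I : {mpoly K[n]} -> Prop) : Prop :=
  exists S : {mpoly K[n]} -> Prop,
    (forall p, S p -> exists d : nat, p \is d.-homog) /\
    (forall p, I p <-> ideal_gen S p).

Definition mweight n (w : 'I_n -> R) (m : 'X_{1..n}) : R :=
  \sum_(i < n) w i * (m i)%:R.

Definition in_w n (w : 'I_n -> R) (f : {mpoly K[n]}) : {mpoly K[n]} :=
  \sum_(m <- msupp f | all (fun m' => mweight w m' <= mweight w m) (msupp f))
     f@_m *: 'X_[m].

Definition init_ideal n (w : 'I_n -> R) (I : {mpoly K[n]} -> Prop) :=
  ideal_gen (fun q => exists f, I f /\ q = in_w w f).

Definition groebner_basis n (w : 'I_n -> R) (G I : {mpoly K[n]} -> Prop) :=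
  (forall g, G g -> I g) /\
  (forall p, init_ideal w I p <->
             ideal_gen (fun q => exists g, G g /\ q = in_w w g) p).

Definition lead_mono n (w : 'I_n -> R) (f : {mpoly K[n]}) (m0 : 'X_{1..n}) :=
  m0 \in msupp f /\
  forall m, m \in msupp f -> m != m0 -> mweight w m < mweight w m0.

(* t = [:: j_1; ...; j_d] lists the variables of m with multiplicity,
   i.e. m = x_{j_1} ... x_{j_d} *)
Definition repr_mono n (m : 'X_{1..n}) (t : seq 'I_n) :=
  forall i, m i = count_mem i t.

(* ---------- weak Q-homogeneity (generic side) ----------
   adj j k  means "(j,k) in Q" (with coordinates swapped for the y-side). *)
Definition weakly_Q_homog n p (adj : 'I_n -> 'I_p -> bool)
    (w : 'I_n -> R) (f : {mpoly K[n]}) :=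
  exists (d : nat) (m0 : 'X_{1..n}),
    f \is d.-homog /\ lead_mono w f m0 /\
    forall t0, repr_mono m0 t0 ->
    forall m, m \in msupp f -> forall t, repr_mono m t ->
      exists t', perm_eq t t' /\
        forall k : seq 'I_p, all2 adj t0 k -> all2 adj t' k.

(* ---------- lifts (generic side) ----------
   ord m is the chosen ordering x_{j_1}...x_{j_d} of the monomial m of f;
   it must satisfy the compatibility condition of the definition of Lift. *)
Definition valid_order n p (adj : 'I_n -> 'I_p -> bool) (w : 'I_n -> R)
    (f : {mpoly K[n]}) (ord : 'X_{1..n} -> seq 'I_n) :=
  forall m0, lead_mono w f m0 ->
    (forall m, m \in msupp f -> repr_mono m (ord m)) /\
    (forall k : seq 'I_p, all2 adj (ord m0) k ->
       forall m, m \in msupp f -> all2 adj (ord m) k).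

Definition lift_elem n p N (zv : 'I_n -> 'I_p -> {mpoly K[N]})
    (f : {mpoly K[n]}) (ord : 'X_{1..n} -> seq 'I_n) (k : seq 'I_p)
    : {mpoly K[N]} :=
  \sum_(m <- msupp f) f@_m *: \prod_(jk <- zip (ord m) k) zv jk.1 jk.2.

Definition Lift n p N (adj : 'I_n -> 'I_p -> bool)
    (zv : 'I_n -> 'I_p -> {mpoly K[N]}) (w : 'I_n -> R)
    (f : {mpoly K[n]}) (ord : 'X_{1..n} -> seq 'I_n) : {mpoly K[N]} -> Prop :=
  fun h => exists m0 (k : seq 'I_p),
    lead_mono w f m0 /\ all2 adj (ord m0) k /\ h = lift_elem zv f ord k.

End Defs.

Section Toric.
Variables (K : fieldType) (R : realFieldType) (r s : nat)
          (Q : {set 'I_r * 'I_s}).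

(* the variables z_{jk}, (j,k) in Q, are indexed by 'I_#|Q| via enum_val *)
Definition zpair (i : 'I_#|Q|) : 'I_r * 'I_s := enum_val i.

(* the variable z_{jk} (only meaningful for (j,k) in Q; 0 otherwise) *)
Definition zvar (j : 'I_r) (k : 'I_s) : {mpoly K[#|Q|]} :=
  if [pick i : 'I_#|Q| | zpair i == (j, k)] is Some i then 'X_i else 0.

(* K[x,y] = K[X_0..X_{r+s-1}], x_j = X_j, y_k = X_{r+k} *)
Definition xvar (j : 'I_r) : {mpoly K[r + s]} := 'X_(lshift s j).
Definition yvar (k : 'I_s) : {mpoly K[r + s]} := 'X_(rshift r k).

Definition incl_x (f : {mpoly K[r]}) : {mpoly K[r + s]} :=
  f \mPo [tuple xvar i | i < r].
Definition incl_y (g : {mpoly K[s]}) : {mpoly K[r + s]} :=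
  g \mPo [tuple yvar i | i < s].

Definition phiQ (p : {mpoly K[#|Q|]}) : {mpoly K[r + s]} :=
  p \mPo [tuple xvar (zpair i).1 * yvar (zpair i).2 | i < #|Q|].

Definition IQ : {mpoly K[#|Q|]} -> Prop := fun p => phiQ p = 0.

Definition sum_ideal (I : {mpoly K[r]} -> Prop) (J : {mpoly K[s]} -> Prop) :=
  ideal_gen (fun q => (exists f, I f /\ q = incl_x f) \/
                      (exists g, J g /\ q = incl_y g)).

Definition fiber_prod (I : {mpoly K[r]} -> Prop) (J : {mpoly K[s]} -> Prop)
  : {mpoly K[#|Q|]} -> Prop := fun p => sum_ideal I J (phiQ p).

(* H_Q: binomials of the induced cycles j_1-k_1-...-j_l-k_l-j_1 of G_Q
   (l >= 2, distinct vertices, indices mod l via ordS). *)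
Definition HQ : {mpoly K[#|Q|]} -> Prop :=
  fun h => exists (l : nat) (j : 'I_l -> 'I_r) (k : 'I_l -> 'I_s),
    [/\ (1 < l)%N, injective j, injective k,
        (forall a, (j a, k a) \in Q /\ (j (ordS a), k a) \in Q) &
      [/\
        (* induced: the only edges among cycle vertices are cycle edges *)
        (forall a b, (j a, k b) \in Q -> a = b \/ a = ordS b) &
        h = \prod_(a < l) zvar (j a) (k a)
            - \prod_(a < l) zvar (j (ordS a)) (k a)]].

Definition adjx (j : 'I_r) (k : 'I_s) : bool := (j, k) \in Q.
Definition adjy (k : 'I_s) (j : 'I_r) : bool := (j, k) \in Q.
Definition zvar_y (k : 'I_s) (j : 'I_r) : {mpoly K[#|Q|]} := zvar j k.

(* omega' = (omega_1, omega_2)^T B_Q + eps * omega : the column of B_Q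
   indexed by z_{jk} is e_j + e_{r+k}. *)
Definition omega' (w1 : 'I_r -> R) (w2 : 'I_s -> R) (eps : R)
  (w : 'I_#|Q| -> R) : 'I_#|Q| -> R :=
  fun i => w1 (zpair i).1 + w2 (zpair i).2 + eps * w i.

End Toric.

Arguments zpair {r s} Q i.
Arguments zvar {K r s} Q j k.
Arguments xvar {K r s} j.
Arguments yvar {K r s} k.
Arguments phiQ {K r s} Q p.
Arguments IQ {K r s} Q p.
Arguments sum_ideal {K r s} I J _.
Arguments fiber_prod {K r s} Q I J _.
Arguments HQ {K r s} Q h.
Arguments adjx {r s} Q j k.
Arguments adjy {r s} Q k j.
Arguments zvar_y {K r s} Q k j.
Arguments omega' {R r s} Q w1 w2 eps w _.

(* For small [eps], the [omega']-weight of a monomial [z^u] is the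
   [(w1, w2)]-weight of [phi_Q(z^u)] perturbed by [eps * w(u)].  If the
   [x]-part of [phi_Q(z^u)] is divisible by the leading monomial of some
   [f] in [F], then a lift [f_k] has [omega']-leading monomial dividing [z^u]:
   [phi_Q(f_k) = f y^k], so the order on the terms of [f_k] is decided by
   [w1] once [eps] is small; likewise for [G].  Dividing by the lifts thus
   writes any [p] as a combination of lifts, all of [omega']-weight at most
   that of [p], plus a remainder [r] whose monomials map to products of an
   [I]-standard and a [J]-standard monomial.
   For [p] in [I x_Q J], [phi_Q(r)] lies in [I + J] and is therefore zero, so
   [r] lies in [I_Q].  On each fiber of [phi_Q] the weight [omega'] is an
   affine function of [w] and the binomials of [H_Q] are fiber-homogeneous,
   so the [omega']-initial part of [r] is generated by the initial forms of
   [H_Q]. *)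

From Pilot Require Import Defs.
From HB Require Import structures.
From mathcomp Require Import all_boot all_order all_algebra all_fingroup.
From mathcomp Require Import mpoly.
From mathcomp Require Import ring lra.
From Stdlib Require Import Classical ClassicalEpsilon.

Set Implicit Arguments.
Unset Strict Implicit.
Unset Printing Implicit Defensive.
Import Order.TTheory GRing.Theory Num.Theory.
Local Open Scope ring_scope.

(* [mpoly] exports a different [mweight]. *)
Local Notation wt := Defs.mweight.

Section Weights.
Variables (K : fieldType) (R : realFieldType) (n : nat).
Implicit Types (v : 'I_n -> R) (f g p : {mpoly K[n]}) (m u : 'X_{1..n}).

Lemma mweightD v m1 m2 : wt v (m1 + m2)%MM = wt v m1 + wt v m2.
Proof.
rewrite /Defs.mweight -big_split /=.
by apply: eq_bigr => i _; rewrite mnmDE natrD mulrDr.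
Qed.

Lemma mweight_norm_le v m : `|wt v m| <= (mdeg m)%:R * \sum_i `|v i|.
Proof.
rewrite /Defs.mweight mdegE natr_sum mulr_suml.
apply: le_trans (ler_norm_sum _ _ _) _; apply: ler_sum => i _.
rewrite normrM normr_nat mulrC ler_wpM2l //.
by rewrite (bigD1 i) //= lerDl; apply: sumr_ge0 => j _.
Qed.

Lemma mweight_ind v (P : 'X_{1..n} -> Prop) :
  (forall u, (forall u', mdeg u' = mdeg u -> wt v u' < wt v u -> P u') -> P u) ->
  forall u, P u.
Proof.
move=> IH u; set D := mdeg u.
pose below u0 := [set b : 'X_{1..n < D.+1} | wt v (val b) < wt v u0].
suff : forall k u0, mdeg u0 = D -> (#|below u0| < k)%N -> P u0 by apply.
elim=> // k IHk u0 Du0 lt_k; apply: IH => u' Du' lt_u'.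
apply: IHk; first by rewrite Du'.
rewrite -ltnS; apply: leq_trans lt_k; rewrite ltnS; apply: proper_card; apply/properP; split.
  by apply/subsetP => b; rewrite !inE => /lt_trans; apply.
have bu' : (mdeg u' < D.+1)%N by rewrite Du' Du0.
by exists (BMultinom bu'); rewrite !inE ?ltxx.
Qed.

Lemma mcoeff_sum_filter (P : pred 'X_{1..n}) f m :
  (\sum_(m0 <- msupp f | P m0) f@_m0 *: 'X_[m0])@_m = if P m then f@_m else 0.
Proof.
rewrite raddf_sum /= (eq_bigr (fun m0 => if m0 == m then f@_m else 0)); last first.
  by move=> m0 _; rewrite mcoeffZ mcoeffX; case: eqP => [->|_]; rewrite ?mulr1 ?mulr0.
rewrite -big_mkcondr /=; have [mf|mNf] := boolP (m \in msupp f); last first.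
  by rewrite memN_msupp_eq0 // big1 //; case: (P m).
rewrite (big_rem m) //= eqxx andbT big1_seq ?addr0 //.
by move=> y /andP [/andP [_ /eqP ->]]; rewrite mem_rem_uniqF // msupp_uniq.
Qed.

Definition wpart v (W : R) f : {mpoly K[n]} :=
  \sum_(m <- msupp f | wt v m == W) f@_m *: 'X_[m].

Lemma mcoeff_wpart v W f m : (wpart v W f)@_m = if wt v m == W then f@_m else 0.
Proof. exact: mcoeff_sum_filter. Qed.

Lemma mcoeff_in_w v f m :
  (in_w v f)@_m = if all (fun m' => wt v m' <= wt v m) (msupp f) then f@_m else 0.
Proof. exact: mcoeff_sum_filter. Qed.

Lemma wpart_is_linear v W : linear (wpart v W).
Proof.
move=> c f g; apply/mpolyP => m.
by rewrite mcoeffD mcoeffZ !mcoeff_wpart mcoeffD mcoeffZ; case: ifP; rewrite ?mulr0 ?addr0.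
Qed.

HB.instance Definition _ v W :=
  GRing.isLinear.Build K {mpoly K[n]} {mpoly K[n]} _ (wpart v W) (wpart_is_linear v W).

Lemma exists_mweight_max v (s : seq 'X_{1..n}) : s != [::] ->
  exists2 m0, m0 \in s & forall m, m \in s -> wt v m <= wt v m0.
Proof.
elim: s => // x s IH _; have [-> | /IH [m ms Hm]] := eqVneq s [::].
  by exists x; rewrite ?mem_head // => m; rewrite inE => /eqP ->.
have [le_xm | lt_mx] := leP (wt v x) (wt v m).
  by exists m; rewrite ?inE ?ms ?orbT // => m'; rewrite inE => /orP [/eqP -> | /Hm].
exists x; rewrite ?mem_head // => m'; rewrite inE => /orP [/eqP -> // | /Hm].
by move/le_trans; apply; apply: ltW.
Qed.

Lemma wpart_bounded v V g : (forall m, m \in msupp g -> wt v m <= V) ->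
  wpart v V g = 0 \/ wpart v V g = in_w v g.
Proof.
move=> le_V; have [/hasP [m0 m0g /eqP m0V] | hasN] := boolP (has (fun m => wt v m == V) (msupp g)).
  right; apply/mpolyP => m; rewrite mcoeff_wpart mcoeff_in_w.
  have [mg | mNg] := boolP (m \in msupp g); last first.
    by rewrite (memN_msupp_eq0 mNg) !if_same.
  have [-> | neV] := eqVneq (wt v m) V; first by rewrite (introT allP) // => m' /le_V.
  case: allP => // /(_ m0 m0g); rewrite m0V => le_Vm.
  by case/negP: neV; rewrite eq_le le_Vm le_V.
left; apply/mpolyP => m; rewrite mcoeff_wpart mcoeff0; case: eqP => // mV.
by apply: memN_msupp_eq0; apply: contra hasN => mg; apply/hasP; exists m => //; apply/eqP.
Qed.

Lemma in_w_neq0 v f : f != 0 -> in_w v f != 0.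
Proof.
rewrite -msupp_eq0 => /(exists_mweight_max v) [m0 m0f le_m0].
apply/eqP => /mpolyP /(_ m0); rewrite mcoeff_in_w mcoeff0 (introT allP) //.
by move/eqP; rewrite mcoeff_eq0 m0f.
Qed.

Lemma in_w_eq_wpart v f : f != 0 -> exists W,
  (forall m, m \in msupp f -> wt v m <= W) /\ in_w v f = wpart v W f.
Proof.
move=> f0; have := f0; rewrite -msupp_eq0 => /(exists_mweight_max v) [m0 m0f le_m0].
exists (wt v m0); split => //; have [part0 | //] := wpart_bounded le_m0.
move: part0 => /mpolyP /(_ m0); rewrite mcoeff_wpart eqxx mcoeff0 => /eqP.
by rewrite mcoeff_eq0 m0f.
Qed.

Lemma in_w0 v : in_w v (0 : {mpoly K[n]}) = 0.
Proof. by rewrite /in_w msupp0 big_nil. Qed.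

Lemma mcoeffXM u g m :
  ('X_[u] * g)@_m = if (u <= m)%MM then g@_(m - u)%MM else 0.
Proof.
rewrite mpoly_mulC; case: ifP => le_um; first by rewrite -{1}(submK le_um) addmC mcoeffMX.
apply: memN_msupp_eq0; rewrite (perm_mem (msuppMX _ _)).
by apply/negP => /mapP [m' _ Em]; move/negP: le_um; apply; rewrite Em lem_addr.
Qed.

Lemma msuppXM u g m : m \in msupp ('X_[u] * g) ->
  exists2 m', m' \in msupp g & m = (u + m')%MM.
Proof. by rewrite mpoly_mulC (perm_mem (msuppMX _ _)) => /mapP [m' ? ->]; exists m'. Qed.

Lemma mulX_expand u p : 'X_[u] * p = \sum_(m <- msupp p) p@_m *: 'X_[(u + m)%MM].
Proof.
rewrite {1}(mpolyE p) mulr_sumr; apply: eq_bigr => m _.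
by rewrite -scalerAr mpolyXD.
Qed.

Lemma mpolyX_reduce u m0 g : g@_m0 != 0 -> 'X_[(u + m0)%MM] =
  (g@_m0)^-1 *: ('X_[u] * g) - (g@_m0)^-1 *: ('X_[u] * (g - g@_m0 *: 'X_[m0])).
Proof.
move=> g_m0; rewrite -scalerBr -mulrBr opprB addrC subrK -scalerAr -mpolyXD.
by rewrite scalerA mulVf // scale1r.
Qed.

Lemma msupp_drop_term g m0 m : m \in msupp (g - g@_m0 *: 'X_[m0]) ->
  m \in msupp g /\ m != m0.
Proof.
rewrite [m \in msupp (_ - _)]mcoeff_msupp mcoeffB mcoeffZ mcoeffX [m0 == m]eq_sym.
have [-> | ne] := eqVneq m m0; first by rewrite mulr1 subrr eqxx.
by rewrite mulr0 subr0 -mcoeff_msupp.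
Qed.

Lemma wpartXM v W u g : wpart v W ('X_[u] * g) = 'X_[u] * wpart v (W - wt v u) g.
Proof.
apply/mpolyP => m; rewrite mcoeff_wpart !mcoeffXM.
have [le_um | _] := boolP (u <= m)%MM; last by rewrite if_same.
rewrite mcoeff_wpart -{1}(submK le_um) mweightD.
by rewrite -(inj_eq (addIr (- wt v u))) addrK.
Qed.
End Weights.

Section LeadingMonomials.
Variables (K : fieldType) (R : realFieldType) (n : nat).
Implicit Types (v : 'I_n -> R) (f : {mpoly K[n]}) (m : 'X_{1..n}).

Lemma mcoeff_lead_neq0 v f m0 : lead_mono v f m0 -> f@_m0 != 0.
Proof. by rewrite -mcoeff_msupp => -[]. Qed.

Lemma in_w_lead v f m0 : lead_mono v f m0 -> in_w v f = f@_m0 *: 'X_[m0].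
Proof.
move=> [m0f lt0]; apply/mpolyP => m; rewrite mcoeff_in_w mcoeffZ mcoeffX.
have [<- | ne] := eqVneq m0 m.
  rewrite mulr1 (introT allP) // => m' m'f.
  by have [-> // | ne'] := eqVneq m' m0; apply/ltW/lt0.
rewrite mulr0; have [mf | mNf] := boolP (m \in msupp f); last first.
  by rewrite (memN_msupp_eq0 mNf) if_same.
case: allP => // /(_ m0 m0f); rewrite leNgt => /negP; case.
by apply: lt0; rewrite // eq_sym.
Qed.

Lemma msupp_in_w v f m : m \in msupp (in_w v f) -> m \in msupp f.
Proof. by rewrite !mcoeff_msupp mcoeff_in_w; case: ifP; rewrite ?eqxx. Qed.

End LeadingMonomials.

Section Ideals.
Variables (K : fieldType) (n : nat).
Implicit Types (S P : {mpoly K[n]} -> Prop) (p q a : {mpoly K[n]}).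

Definition lin_closed P :=
  [/\ P 0, forall p q, P p -> P q -> P (p + q) & forall c p, P p -> P (c *: p)].

Definition is_ideal P :=
  [/\ P 0, forall p q, P p -> P q -> P (p + q) & forall a p, P p -> P (a * p)].

Lemma lin_closed_sum P (T : eqType) (s : seq T) (C : pred T) (F : T -> {mpoly K[n]}) :
  lin_closed P -> (forall x, x \in s -> C x -> P (F x)) -> P (\sum_(x <- s | C x) F x).
Proof.
case=> P0 PD _ PF; rewrite big_seq_cond.
by apply: (big_ind P) => // x /andP []; apply: PF.
Qed.

Lemma lin_closedB P p q : lin_closed P -> P p -> P q -> P (p - q).
Proof. by case=> _ PD PZ Pp Pq; rewrite -scaleN1r; apply/PD/PZ. Qed.

Lemma lin_closed_mpoly P p : lin_closed P -> (forall m, m \in msupp p -> P 'X_[m]) -> P p.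
Proof.
move=> linP PX; rewrite (mpolyE p); apply: lin_closed_sum => // m mp _.
by case: linP => _ _; apply; apply: PX.
Qed.

Lemma is_ideal_lin P : is_ideal P -> lin_closed P.
Proof. by case=> P0 PD PM; split => // c p; rewrite -mul_mpolyC; apply: PM. Qed.

Lemma is_ideal_gen S : is_ideal (ideal_gen S).
Proof.
split; first by exists [::]; rewrite big_nil.
  move=> p q [l1 [S1 ->]] [l2 [S2 ->]]; exists (l1 ++ l2); rewrite big_cat.
  by split => // x; rewrite mem_cat => /orP [/S1 | /S2].
move=> a p [l [Sl ->]]; exists [seq (a * x.1, x.2) | x <- l]; split.
  by move=> q /mapP [x xl ->]; exact: (Sl x xl).
by rewrite big_map mulr_sumr; apply: eq_bigr => x _; rewrite mulrA.
Qed.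

Lemma ideal_gen_in S p : S p -> ideal_gen S p.
Proof.
move=> Sp; exists [:: (1, p)]; rewrite big_seq1 mul1r.
by split => // x; rewrite inE => /eqP ->.
Qed.

Lemma ideal_gen_min S P p : is_ideal P -> (forall q, S q -> P q) -> ideal_gen S p -> P p.
Proof.
move=> idP SP [l [Sl ->]]; apply: lin_closed_sum (is_ideal_lin idP) _ => x xl _.
by case: idP => _ _; apply; apply/SP/Sl.
Qed.

Lemma homog_ideal_is_ideal P : homog_ideal P -> is_ideal P.
Proof.
case=> S [_ PS]; have [P0 PD PM] := is_ideal_gen S.
by split=> [|p q|a p]; rewrite ?PS //; [apply: PD | apply: PM].
Qed.

Lemma ideal_gen_monomial_supp S (B : 'X_{1..n} -> Prop) p :
  (forall q, S q -> exists c m0, B m0 /\ q = c *: 'X_[m0]) ->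
  ideal_gen S p -> forall m, m \in msupp p -> exists2 m0, B m0 & (m0 <= m)%MM.
Proof.
move=> Smono [l [Sl ->]] m /msupp_sum_le /flattenP [_ /mapP [x xl ->]].
rewrite filter_predT in xl; have [c [m0 [Bm0 ->]]] := Smono _ (Sl _ xl).
rewrite -scalerAr => /msuppZ_le; rewrite mpoly_mulC => /msuppXM [m' _ ->].
by exists m0; rewrite // lem_addr.
Qed.

End Ideals.

Section MonomialLinearExtension.
Variables (K : fieldType) (n N : nat) (T : 'X_{1..n} -> {mpoly K[N]}).

Definition mlinext (p : {mpoly K[n]}) : {mpoly K[N]} := \sum_(m <- msupp p) p@_m *: T m.

Lemma mlinext_supp_ext (s : seq 'X_{1..n}) p : uniq s -> {subset msupp p <= s} ->
  mlinext p = \sum_(m <- s) p@_m *: T m.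
Proof.
move=> s_uniq sub_s; rewrite /mlinext [RHS](bigID (fun m => m \in msupp p)) /=.
rewrite [X in _ + X]big1 ?addr0 => [|m /memN_msupp_eq0 ->]; last by rewrite scale0r.
rewrite -[RHS]big_filter; apply/perm_big/uniq_perm; rewrite ?msupp_uniq ?filter_uniq //.
by move=> m; rewrite mem_filter; case: (boolP (m \in msupp p)) => // /sub_s ->.
Qed.

Lemma mlinext_is_linear : linear mlinext.
Proof.
move=> c p q; set s := undup (msupp p ++ msupp q).
have s_uniq : uniq s := undup_uniq _.
have sub_p : {subset msupp p <= s} by move=> m mp; rewrite mem_undup mem_cat mp.
have sub_q : {subset msupp q <= s} by move=> m mq; rewrite mem_undup mem_cat mq orbT.
have sub_cpq : {subset msupp (c *: p + q) <= s}.
  by move=> m /msuppD_le; rewrite mem_cat => /orP [/msuppZ_le /sub_p | /sub_q].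
rewrite !(mlinext_supp_ext s_uniq) // scaler_sumr -big_split /=.
by apply: eq_bigr => m _; rewrite mcoeffD mcoeffZ scalerDl scalerA.
Qed.

HB.instance Definition _ :=
  GRing.isLinear.Build K {mpoly K[n]} {mpoly K[N]} _ mlinext mlinext_is_linear.

Lemma mlinextX m : mlinext 'X_[m] = T m.
Proof. by rewrite /mlinext msuppX big_seq1 mcoeffX eqxx scale1r. Qed.

End MonomialLinearExtension.

Section StandardMonomials.
Variables (K : fieldType) (R : realFieldType) (n : nat) (w : 'I_n -> R).
Variables (I : {mpoly K[n]} -> Prop) (F : seq {mpoly K[n]}).
Hypothesis idealI : is_ideal I.
Hypothesis gbF : groebner_basis w (fun f => f \in F) I.
Hypothesis leadF : forall f, f \in F -> exists d m0, f \is d.-homog /\ lead_mono w f m0.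
Implicit Types (p s : {mpoly K[n]}) (m u : 'X_{1..n}).

Definition std_mono m := forall f m0, f \in F -> lead_mono w f m0 -> ~ (m0 <= m)%MM.

Definition std_supported p := forall m, m \in msupp p -> std_mono m.

Lemma not_std_mono m : ~ std_mono m ->
  exists f m0, [/\ f \in F, lead_mono w f m0 & (m0 <= m)%MM].
Proof.
move=> nstd_m; apply: NNPP => none; apply: nstd_m => f m0 fF lead_f le.
by apply: none; exists f, m0.
Qed.

Lemma std_supported_ideal_eq0 p : I p -> std_supported p -> p = 0.
Proof.
move=> Ip std_p; have [// | p0] := eqVneq p 0; exfalso.
have [m m_in] : exists m, m \in msupp (in_w w p).
  move: (in_w_neq0 w p0); rewrite -msupp_eq0.
  by case: msupp => // m ? _; exists m; rewrite mem_head.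
have : init_ideal w I (in_w w p) by apply: ideal_gen_in; exists p.
move/(proj2 gbF)/ideal_gen_monomial_supp.
move=> /(_ (fun m0 => exists2 f, f \in F & lead_mono w f m0)).
case/(_ _ m m_in) => [_ [g [gF ->]] | m0 [f fF lead_f] le_m0].
  have [d [m0 [_ lead_g]]] := leadF gF.
  by exists g@_m0, m0; split; [exists g | exact: in_w_lead].
exact: std_p m (msupp_in_w m_in) f m0 fF lead_f le_m0.
Qed.

Definition std_reducible p := exists s, std_supported s /\ I (p - s).

Lemma std_reducible_lin : lin_closed std_reducible.
Proof.
have [I0 ID IZ] := is_ideal_lin idealI.
split.
- by exists 0; rewrite subrr; split => // m; rewrite msupp0.
- move=> p q [s1 [std1 I1]] [s2 [std2 I2]]; exists (s1 + s2); split.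
    by move=> m /msuppD_le; rewrite mem_cat => /orP [/std1 | /std2].
  by rewrite opprD addrACA; apply: ID.
- move=> c p [s [std_s Is]]; exists (c *: s); split; first by move=> m /msuppZ_le /std_s.
  by rewrite -scalerBr; apply: IZ.
Qed.

Lemma std_reducible_mono u : std_reducible 'X_[u].
Proof.
have [I0 _ IM] := idealI; have [_ _ IZ] := is_ideal_lin idealI.
have [_ RD RZ] := std_reducible_lin.
elim/(@mweight_ind _ _ w): u => u IH.
case: (classic (std_mono u)) => [std_u | /not_std_mono [f [m0 [fF lead_f le_m0]]]].
  by exists 'X_[u]; rewrite subrr; split => // m; rewrite msuppX inE => /eqP ->.
have [d [_ [homf _]]] := leadF fF.
rewrite -(submK le_m0) (mpolyX_reduce _ (mcoeff_lead_neq0 lead_f)).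
apply: RD.
  by exists 0; rewrite subr0; split => [m|]; [rewrite msupp0 | apply/IZ/IM/(proj1 gbF)].
rewrite -scaleNr; apply: (RZ); rewrite mulX_expand.
apply: (lin_closed_sum std_reducible_lin) => m mr _.
apply: RZ; have [mf ne_m] := msupp_drop_term mr; apply: IH.
  rewrite mdegD -[in RHS](submK le_m0) mdegD.
  by rewrite (dhomog_mf homf mf) (dhomog_mf homf (proj1 lead_f)).
by rewrite mweightD -[in X in _ < X](submK le_m0) mweightD ltrD2l; apply: (proj2 lead_f).
Qed.

Definition normal_form u : {mpoly K[n]} :=
  proj1_sig (constructive_indefinite_description _ (std_reducible_mono u)).

Lemma normal_formP u : std_supported (normal_form u) /\ I ('X_[u] - normal_form u).
Proof. exact: proj2_sig (constructive_indefinite_description _ (std_reducible_mono u)). Qed.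

Lemma normal_form_std u : std_mono u -> normal_form u = 'X_[u].
Proof.
move=> std_u; have [std_nf Inf] := normal_formP u; apply/esym/subr0_eq.
apply: std_supported_ideal_eq0 Inf _ => m /msuppB_le; rewrite mem_cat msuppX inE.
by case/orP => [/eqP -> | /std_nf].
Qed.

Lemma mlinext_normal_form_ideal p : I p -> mlinext normal_form p = 0.
Proof.
have linI := is_ideal_lin idealI => Ip.
apply: std_supported_ideal_eq0; last first.
  move=> m /msupp_sum_le /flattenP [_ /mapP [m' _ ->]] /msuppZ_le.
  by apply: (proj1 (normal_formP m')).
rewrite -[mlinext _ _](subKr p); apply: (lin_closedB linI Ip).
rewrite {1}(mpolyE p) /mlinext -sumrB; apply: (lin_closed_sum linI) => m _ _.
by rewrite -scalerBr; case: linI => _ _; apply; apply: (proj2 (normal_formP m)).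
Qed.

End StandardMonomials.

Section Bigrading.
Variables (K : fieldType) (r s : nat).

Definition xpart (m : 'X_{1..r + s}) : 'X_{1..r} := [multinom m (lshift s j) | j < r].
Definition ypart (m : 'X_{1..r + s}) : 'X_{1..s} := [multinom m (rshift r k) | k < s].
Definition embx (a : 'X_{1..r}) : 'X_{1..r + s} := (\sum_(j < r) U_(lshift s j) *+ a j)%MM.
Definition emby (b : 'X_{1..s}) : 'X_{1..r + s} := (\sum_(k < s) U_(rshift r k) *+ b k)%MM.

Lemma embx_lshift a j : embx a (lshift s j) = a j.
Proof.
rewrite /embx mnm_sumE (bigD1 j) //= big1 ?addn0 => [|i ij].
  by rewrite mulmnE mnm1E eqxx mul1n.
by rewrite mulmnE mnm1E (inj_eq (@lshift_inj _ _)) (negbTE ij).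
Qed.

Lemma embx_rshift a k : embx a (rshift r k) = 0%N.
Proof. by rewrite /embx mnm_sumE big1 // => i _; rewrite mulmnE mnm1E eq_lrshift. Qed.

Lemma emby_rshift b k : emby b (rshift r k) = b k.
Proof.
rewrite /emby mnm_sumE (bigD1 k) //= big1 ?addn0 => [|i ik].
  by rewrite mulmnE mnm1E eqxx mul1n.
by rewrite mulmnE mnm1E (inj_eq (@rshift_inj _ _)) (negbTE ik).
Qed.

Lemma emby_lshift b j : emby b (lshift s j) = 0%N.
Proof. by rewrite /emby mnm_sumE big1 // => i _; rewrite mulmnE mnm1E eq_rlshift. Qed.

Lemma mnm_bisplit m : m = (embx (xpart m) + emby (ypart m))%MM.
Proof.
apply/mnmP => i; rewrite mnmDE; case: (splitP i) => [j | k] Ei.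
  by rewrite (_ : i = lshift s j) ?embx_lshift ?emby_lshift ?addn0 ?mnmE //; apply: val_inj.
by rewrite (_ : i = rshift r k) ?embx_rshift ?emby_rshift ?mnmE //; apply: val_inj.
Qed.

Lemma xpartD m1 m2 : xpart (m1 + m2)%MM = (xpart m1 + xpart m2)%MM.
Proof. by apply/mnmP => j; rewrite mnmDE !mnmE ?mnmDE. Qed.

Lemma ypartD m1 m2 : ypart (m1 + m2)%MM = (ypart m1 + ypart m2)%MM.
Proof. by apply/mnmP => k; rewrite mnmDE !mnmE ?mnmDE. Qed.

Lemma xpart_embx a : xpart (embx a) = a.
Proof. by apply/mnmP => j; rewrite mnmE embx_lshift. Qed.

Lemma ypart_embx a : ypart (embx a) = 0%MM.
Proof. by apply/mnmP => k; rewrite mnmE embx_rshift mnm0E. Qed.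

Lemma xpart_emby b : xpart (emby b) = 0%MM.
Proof. by apply/mnmP => j; rewrite mnmE emby_lshift mnm0E. Qed.

Lemma ypart_emby b : ypart (emby b) = b.
Proof. by apply/mnmP => k; rewrite mnmE emby_rshift. Qed.

Lemma incl_xX a : incl_x s 'X_[a] = 'X_[embx a] :> {mpoly K[r + s]}.
Proof. by rewrite /incl_x comp_mpolyX -mprodXnE; apply: eq_bigr => j _; rewrite tnth_mktuple. Qed.

Lemma incl_yX b : incl_y r 'X_[b] = 'X_[emby b] :> {mpoly K[r + s]}.
Proof. by rewrite /incl_y comp_mpolyX -mprodXnE; apply: eq_bigr => k _; rewrite tnth_mktuple. Qed.

Lemma incl_xE (f : {mpoly K[r]}) :
  incl_x s f = \sum_(m <- msupp f) f@_m *: 'X_[embx m] :> {mpoly K[r + s]}.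
Proof. by rewrite /incl_x comp_mpolyEX; apply: eq_bigr => m _; rewrite -/(incl_x s _) incl_xX. Qed.

Lemma incl_yE (g : {mpoly K[s]}) :
  incl_y r g = \sum_(m <- msupp g) g@_m *: 'X_[emby m] :> {mpoly K[r + s]}.
Proof. by rewrite /incl_y comp_mpolyEX; apply: eq_bigr => m _; rewrite -/(incl_y r _) incl_yX. Qed.

End Bigrading.

Section StandardModuloSumIdeal.
Variables (K : fieldType) (R : realFieldType) (r s : nat).
Variables (w1 : 'I_r -> R) (w2 : 'I_s -> R).
Variables (I : {mpoly K[r]} -> Prop) (J : {mpoly K[s]} -> Prop).
Variables (F : seq {mpoly K[r]}) (G : seq {mpoly K[s]}).
Hypotheses (idealI : is_ideal I) (idealJ : is_ideal J).
Hypotheses (gbI : groebner_basis w1 (fun f => f \in F) I)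
  (gbJ : groebner_basis w2 (fun g => g \in G) J).
Hypotheses (leadF : forall f, f \in F -> exists d m0, f \is d.-homog /\ lead_mono w1 f m0)
  (leadG : forall g, g \in G -> exists d m0, g \is d.-homog /\ lead_mono w2 g m0).

Local Notation nfx := (normal_form idealI gbI leadF).
Local Notation nfy := (normal_form idealJ gbJ leadG).

Definition bistd_mono (m : 'X_{1..r + s}) :=
  std_mono w1 F (xpart m) /\ std_mono w2 G (ypart m).

(* The linear map [x^a y^b |-> nf_I(x^a) nf_J(y^b)] kills [I + J] and fixes
   bistandard monomials, so these are independent modulo [I + J]. *)
Definition bistd_normal_form (m : 'X_{1..r + s}) : {mpoly K[r + s]} :=
  incl_x s (nfx (xpart m)) * incl_y r (nfy (ypart m)).

Local Notation NF := (mlinext bistd_normal_form).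

Lemma bistd_normal_form_kill_x u f : I f -> NF ('X_[u] * incl_x s f) = 0.
Proof.
move=> If; rewrite incl_xE mulr_sumr linear_sum.
under eq_bigr => m _ do rewrite -scalerAr -mpolyXD linearZ /= mlinextX /bistd_normal_form
  xpartD ypartD xpart_embx ypart_embx addm0 scalerAl.
rewrite -mulr_suml; have -> : \sum_(m <- msupp f) f@_m *: incl_x s (nfx (xpart u + m)%MM) =
    incl_x s (mlinext nfx ('X_[xpart u] * f)).
  rewrite mulX_expand linear_sum /incl_x linear_sum; apply: eq_bigr => m _.
  by rewrite !linearZ /= mlinextX.
rewrite mlinext_normal_form_ideal; first by rewrite /incl_x raddf0 mul0r.
by case: idealI => _ _; apply.
Qed.

Lemma bistd_normal_form_kill_y u g : J g -> NF ('X_[u] * incl_y r g) = 0.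
Proof.
move=> Jg; rewrite incl_yE mulr_sumr linear_sum.
under eq_bigr => m _ do rewrite -scalerAr -mpolyXD linearZ /= mlinextX /bistd_normal_form
  xpartD ypartD xpart_emby ypart_emby addm0 scalerAr.
rewrite -mulr_sumr; have -> : \sum_(m <- msupp g) g@_m *: incl_y r (nfy (ypart u + m)%MM) =
    incl_y r (mlinext nfy ('X_[ypart u] * g)).
  rewrite mulX_expand linear_sum /incl_y linear_sum; apply: eq_bigr => m _.
  by rewrite !linearZ /= mlinextX.
rewrite mlinext_normal_form_ideal; first by rewrite /incl_y raddf0 mulr0.
by case: idealJ => _ _; apply.
Qed.

Lemma bistd_normal_form_sum_ideal P : sum_ideal I J P -> NF P = 0.
Proof.
move=> IJP; pose killed P := forall q, NF (q * P) = 0.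
suff /(_ 1) : killed P by rewrite mul1r.
apply: ideal_gen_min IJP; rewrite /killed.
- split=> [q | p1 p2 k1 k2 q | a p1 k1 q]; first by rewrite mulr0 linear0.
    by rewrite mulrDr linearD /= k1 k2 addr0.
  by rewrite mulrA k1.
move=> _ [[f [If ->]] | [g [Jg ->]]] q.
- rewrite (mpolyE q) mulr_suml linear_sum big1 // => m _.
  by rewrite -scalerAl linearZ /= bistd_normal_form_kill_x ?scaler0.
- rewrite (mpolyE q) mulr_suml linear_sum big1 // => m _.
  by rewrite -scalerAl linearZ /= bistd_normal_form_kill_y ?scaler0.
Qed.

Lemma bistd_normal_form_std P :
  (forall m, m \in msupp P -> bistd_mono m) -> NF P = P.
Proof.
move=> std_P; rewrite {2}(mpolyE P) /mlinext; apply: eq_big_seq => m mP.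
have [std_x std_y] := std_P m mP.
by rewrite /bistd_normal_form !normal_form_std // incl_xX incl_yX -mpolyXD -mnm_bisplit.
Qed.

Lemma sum_ideal_bistd_eq0 P : sum_ideal I J P ->
  (forall m, m \in msupp P -> bistd_mono m) -> P = 0.
Proof.
by move=> IJP std_P; rewrite -(bistd_normal_form_std std_P) bistd_normal_form_sum_ideal.
Qed.

End StandardModuloSumIdeal.

Section ToricMap.
Variables (K : fieldType) (r s : nat) (Q : {set 'I_r * 'I_s}).
Local Notation N := #|Q|.

Definition zmnm (q : 'I_r * 'I_s) : 'X_{1..N} :=
  if [pick i : 'I_N | zpair Q i == q] is Some i then U_(i)%MM else 0%MM.

Lemma zpair_inj : injective (zpair Q).
Proof. exact: enum_val_inj. Qed.

Lemma zpair_in i : zpair Q i \in Q.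
Proof. exact: enum_valP. Qed.

Lemma zpair_onto q : q \in Q -> exists i, zpair Q i = q.
Proof. by move=> qQ; exists (enum_rank_in qQ q); rewrite /zpair enum_rankK_in. Qed.

Lemma zmnm_zpair i : zmnm (zpair Q i) = U_(i)%MM.
Proof. by rewrite /zmnm; case: pickP => [i' /eqP /zpair_inj -> // | /(_ i)]; rewrite eqxx. Qed.

Lemma zvarX j k : (j, k) \in Q -> zvar (K := K) Q j k = 'X_[zmnm (j, k)].
Proof.
case/zpair_onto => i Ei; rewrite /zvar -Ei zmnm_zpair.
by case: pickP => [i' /eqP /zpair_inj -> // | /(_ i)]; rewrite eqxx.
Qed.

Definition phi_mnm (u : 'X_{1..N}) : 'X_{1..r + s} :=
  (\sum_(i < N) (U_(lshift s (zpair Q i).1) + U_(rshift r (zpair Q i).2)) *+ u i)%MM.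

Lemma phi_mnmD u1 u2 : phi_mnm (u1 + u2)%MM = (phi_mnm u1 + phi_mnm u2)%MM.
Proof.
apply/mnmP => l; rewrite mnmDE !mnm_sumE -big_split /=.
by apply: eq_bigr => i _; rewrite !mulmnE !mnmDE mulnDr.
Qed.

Lemma phi_mnm0 : phi_mnm 0%MM = 0%MM.
Proof. by apply/mnmP => l; rewrite mnm_sumE mnm0E big1 // => i _; rewrite mulmnE mnm0E muln0. Qed.

Lemma phi_mnmU i :
  phi_mnm U_(i)%MM = (U_(lshift s (zpair Q i).1) + U_(rshift r (zpair Q i).2))%MM.
Proof.
rewrite /phi_mnm (bigD1 i) //= big1 ?addm0 => [|i' ne]; first by rewrite mnm1E eqxx mulm1n.
by rewrite mnm1E eq_sym (negbTE ne) mulm0n.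
Qed.

Lemma xpart_phi_mnm u j : xpart (phi_mnm u) j = (\sum_(i < N | (zpair Q i).1 == j) u i)%N.
Proof.
rewrite mnmE mnm_sumE [RHS]big_mkcond /=; apply: eq_bigr => i _.
rewrite mulmnE mnmDE !mnm1E eq_rlshift addn0 (inj_eq (@lshift_inj _ _)).
by case: eqP; rewrite ?mul1n ?mul0n.
Qed.

Lemma ypart_phi_mnm u k : ypart (phi_mnm u) k = (\sum_(i < N | (zpair Q i).2 == k) u i)%N.
Proof.
rewrite mnmE mnm_sumE [RHS]big_mkcond /=; apply: eq_bigr => i _.
rewrite mulmnE mnmDE !mnm1E eq_lrshift add0n (inj_eq (@rshift_inj _ _)).
by case: eqP; rewrite ?mul1n ?mul0n.
Qed.

Lemma phiQX u : phiQ (K := K) Q 'X_[u] = 'X_[phi_mnm u].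
Proof.
rewrite /phiQ comp_mpolyX -mprodXnE; apply: eq_bigr => i _.
by rewrite tnth_mktuple /xvar /yvar -mpolyXD.
Qed.

Lemma phiQE p : phiQ Q p = \sum_(m <- msupp p) p@_m *: 'X_[phi_mnm m] :> {mpoly K[r + s]}.
Proof. by rewrite /phiQ comp_mpolyEX; apply: eq_bigr => m _; rewrite -/(phiQ Q _) phiQX. Qed.

Lemma fiber_prod_is_ideal (I : {mpoly K[r]} -> Prop) (J : {mpoly K[s]} -> Prop) :
  is_ideal (fiber_prod Q I J).
Proof.
have [S0 SD SM] := is_ideal_gen (fun q => (exists f, I f /\ q = incl_x s f) \/
                                          (exists g, J g /\ q = incl_y r g)).
rewrite /fiber_prod /phiQ; split=> [|p q|a p]; rewrite ?raddf0 ?raddfD ?rmorphM //.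
  exact: SD.
exact: SM.
Qed.

Lemma HQ_phi_homog h : HQ (K := K) Q h -> exists e, forall m, m \in msupp h -> phi_mnm m = e.
Proof.
move=> [l [j [k [_ _ _ inQ [_ ->]]]]].
rewrite (eq_bigr _ (fun a _ => zvarX (proj1 (inQ a)))).
rewrite (eq_bigr (fun a => 'X_[zmnm (j (ordS a), k a)]) (fun a _ => zvarX (proj2 (inQ a)))).
rewrite !mprodXE; exists (phi_mnm (\sum_(a < l) zmnm (j a, k a))%MM).
move=> m /msuppB_le; rewrite mem_cat !msuppX !inE => /orP [] /eqP -> //.
have phi_zmnm a b : (j a, k b) \in Q ->
    phi_mnm (zmnm (j a, k b)) = (U_(lshift s (j a)) + U_(rshift r (k b)))%MM.
  by case/zpair_onto => i Ei; rewrite -Ei zmnm_zpair phi_mnmU Ei.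
rewrite !(big_morph _ phi_mnmD phi_mnm0).
rewrite (eq_bigr _ (fun a _ => phi_zmnm a a (proj1 (inQ a)))).
rewrite (eq_bigr (fun a => U_(lshift s (j (ordS a))) + U_(rshift r (k a)))%MM
  (fun a _ => phi_zmnm _ a (proj2 (inQ a)))).
by rewrite !big_split /= [in RHS](reindex_inj (@ordS_inj l)).
Qed.

Definition fiber_comp (p : {mpoly K[N]}) (e : 'X_{1..r + s}) : {mpoly K[N]} :=
  \sum_(m <- msupp p | phi_mnm m == e) p@_m *: 'X_[m].

Lemma mcoeff_fiber_comp p e m :
  (fiber_comp p e)@_m = if phi_mnm m == e then p@_m else 0.
Proof. exact: mcoeff_sum_filter. Qed.

Lemma msupp_fiber_comp p e m : m \in msupp (fiber_comp p e) -> phi_mnm m = e.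
Proof. by rewrite mcoeff_msupp mcoeff_fiber_comp; case: (phi_mnm m =P e) => // _; rewrite eqxx. Qed.

Lemma fiber_comp_sum p : p = \sum_(e <- undup [seq phi_mnm m | m <- msupp p]) fiber_comp p e.
Proof.
rewrite (exchange_big_dep predT) //= {1}(mpolyE p); apply: eq_big_seq => m mp.
rewrite (big_rem (phi_mnm m)) ?mem_undup ?map_f //= eqxx big1_seq ?addr0 // => e.
by case/andP => /eqP <-; rewrite mem_rem_uniqF ?undup_uniq // mem_undup map_f.
Qed.

Lemma IQ_fiber_comp p e : IQ Q p -> IQ Q (fiber_comp p e).
Proof.
move=> /(congr1 (mcoeff e)); rewrite phiQE raddf_sum /= mcoeff0 => sum0.
rewrite /IQ /fiber_comp /phiQ linear_sum /=.
rewrite (eq_bigr (fun m => p@_m *: 'X_[e])) => [|m /eqP <-]; last first.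
  by rewrite linearZ /= -/(phiQ Q _) phiQX.
rewrite -scaler_suml (_ : \sum_(m <- msupp p | phi_mnm m == e) p@_m = 0) ?scale0r //.
rewrite -[RHS]sum0 big_mkcond /=; apply: eq_bigr => m _.
by rewrite mcoeffZ mcoeffX; case: eqP; rewrite ?mulr1 ?mulr0.
Qed.

End ToricMap.

Arguments phi_mnm {r s} Q u.

(* With [B = \sum_i |w i|], the [w]-weights of two degree-[d] monomials differ
   by at most [2 d B]; the condition makes [eps * 2 d B] smaller than every
   [v]-gap between monomials of [f]. *)
Definition eps_small (K : fieldType) (R : realFieldType) n (v : 'I_n -> R) (B : R)
    (f : {mpoly K[n]}) (eps : R) :=
  forall m m', m \in msupp f -> m' \in msupp f -> wt v m < wt v m' ->
    eps <= (wt v m' - wt v m) / ((mdeg m')%:R *+ 2 * B + 1).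

Lemma small_mul_lt (R : realFieldType) (e g D : R) :
  0 < e -> 0 <= D -> e <= g / (D + 1) -> e * D < g.
Proof.
move=> e0 D0; rewrite ler_pdivlMr ?ltr_wpDl // mulrDr mulr1.
by apply: lt_le_trans; rewrite ltrDl.
Qed.

Definition mnm_of_seq (q : nat) (t : seq 'I_q) : 'X_{1..q} :=
  [multinom count_mem j t | j < q].

Lemma mnm_of_seq_cons q (x : 'I_q) t : mnm_of_seq (x :: t) = (U_(x) + mnm_of_seq t)%MM.
Proof. by apply/mnmP => j; rewrite mnmDE mnm1E !mnmE /= eq_sym. Qed.

Lemma mnm_of_seq_nil q : mnm_of_seq (@nil 'I_q) = 0%MM.
Proof. by apply/mnmP => j; rewrite !mnmE. Qed.

Lemma mdeg_mnm_of_seq q (t : seq 'I_q) : mdeg (mnm_of_seq t) = size t.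
Proof.
by elim: t => [|x t IH]; rewrite ?mnm_of_seq_nil ?mdeg0 // mnm_of_seq_cons mdegD mdeg1 IH.
Qed.

Lemma repr_mono_mnm_of_seq q (m : 'X_{1..q}) t : repr_mono m t -> m = mnm_of_seq t.
Proof. by move=> mt; apply/mnmP => j; rewrite mt mnmE. Qed.

(* One side of the bipartite graph [G_Q]: [side] and [opp] project an edge to
   its endpoints on this and on the other side, and [edge] rebuilds it.  The
   [x]-side uses [fst], [snd], [pair]; the [y]-side the swapped versions. *)
Section LiftSide.
Variables (K : fieldType) (R : realFieldType) (r s : nat) (Q : {set 'I_r * 'I_s}).
Local Notation N := #|Q|.
Variables (n p : nat) (side : 'I_r * 'I_s -> 'I_n) (opp : 'I_r * 'I_s -> 'I_p)
  (edge : 'I_n -> 'I_p -> 'I_r * 'I_s).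
Hypotheses (side_edge : forall j k, side (edge j k) = j)
  (opp_edge : forall j k, opp (edge j k) = k)
  (edge_side_opp : forall q, edge (side q) (opp q) = q).
Variables (adj : 'I_n -> 'I_p -> bool) (zv : 'I_n -> 'I_p -> {mpoly K[N]}).
Hypotheses (adjE : forall j k, adj j k = (edge j k \in Q))
  (zvE : forall j k, zv j k = zvar Q (edge j k).1 (edge j k).2).

Definition side_mnm (u : 'X_{1..N}) : 'X_{1..n} :=
  [multinom (\sum_(i < N | side (zpair Q i) == j) u i)%N | j < n].
Definition opp_mnm (u : 'X_{1..N}) : 'X_{1..p} :=
  [multinom (\sum_(i < N | opp (zpair Q i) == k) u i)%N | k < p].
Definition zmnm_of (t : seq 'I_n) (k : seq 'I_p) : 'X_{1..N} :=
  (\sum_(x <- zip t k) zmnm Q (edge x.1 x.2))%MM.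

Lemma side_mnmD u1 u2 : side_mnm (u1 + u2)%MM = (side_mnm u1 + side_mnm u2)%MM.
Proof.
by apply/mnmP => j; rewrite mnmDE !mnmE -big_split; apply: eq_bigr => i _; rewrite mnmDE.
Qed.

Lemma opp_mnmD u1 u2 : opp_mnm (u1 + u2)%MM = (opp_mnm u1 + opp_mnm u2)%MM.
Proof.
by apply/mnmP => k; rewrite mnmDE !mnmE -big_split; apply: eq_bigr => i _; rewrite mnmDE.
Qed.

Lemma side_mnm0 : side_mnm 0%MM = 0%MM.
Proof. by apply/mnmP => j; rewrite !mnmE big1 // => i _; rewrite mnm0E. Qed.

Lemma opp_mnm0 : opp_mnm 0%MM = 0%MM.
Proof. by apply/mnmP => k; rewrite !mnmE big1 // => i _; rewrite mnm0E. Qed.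

Lemma side_mnmU i : side_mnm U_(i)%MM = U_(side (zpair Q i))%MM.
Proof.
apply/mnmP => j; rewrite !mnmE big_mkcond (bigD1 i) //= big1 ?addn0 => [|i' ne].
  by rewrite mnm1E eqxx; case: eqP.
by rewrite mnm1E [i == _]eq_sym (negbTE ne) if_same.
Qed.

Lemma opp_mnmU i : opp_mnm U_(i)%MM = U_(opp (zpair Q i))%MM.
Proof.
apply/mnmP => k; rewrite !mnmE big_mkcond (bigD1 i) //= big1 ?addn0 => [|i' ne].
  by rewrite mnm1E eqxx; case: eqP.
by rewrite mnm1E [i == _]eq_sym (negbTE ne) if_same.
Qed.

Lemma zmnm_edge j k : adj j k -> exists2 i, zpair Q i = edge j k & zmnm Q (edge j k) = U_(i)%MM.
Proof. by rewrite adjE => /zpair_onto [i Ei]; exists i; rewrite // -Ei zmnm_zpair. Qed.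

Lemma zmnm_of_cons j t k ks : zmnm_of (j :: t) (k :: ks) = (zmnm Q (edge j k) + zmnm_of t ks)%MM.
Proof. by rewrite /zmnm_of /= big_cons. Qed.

Lemma side_mnm_zmnm_of t k : all2 adj t k -> side_mnm (zmnm_of t k) = mnm_of_seq t.
Proof.
elim: t k => [|j t IH] [|k ks] //=; first by rewrite /zmnm_of big_nil side_mnm0 mnm_of_seq_nil.
case/andP => adj_jk adj_t; rewrite zmnm_of_cons side_mnmD IH // mnm_of_seq_cons.
by have [i Ei ->] := zmnm_edge adj_jk; rewrite side_mnmU Ei side_edge.
Qed.

Lemma opp_mnm_zmnm_of t k : all2 adj t k -> opp_mnm (zmnm_of t k) = mnm_of_seq k.
Proof.
elim: t k => [|j t IH] [|k ks] //=; first by rewrite /zmnm_of big_nil opp_mnm0 mnm_of_seq_nil.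
case/andP => adj_jk adj_t; rewrite zmnm_of_cons opp_mnmD IH // mnm_of_seq_cons.
by have [i Ei ->] := zmnm_edge adj_jk; rewrite opp_mnmU Ei opp_edge.
Qed.

Lemma mdeg_zmnm_of t k : all2 adj t k -> mdeg (zmnm_of t k) = size t.
Proof.
elim: t k => [|j t IH] [|k ks] //=; first by rewrite /zmnm_of big_nil mdeg0.
case/andP => adj_jk adj_t; rewrite zmnm_of_cons mdegD IH //.
by have [i _ ->] := zmnm_edge adj_jk; rewrite mdeg1.
Qed.

Lemma prod_zv t k : all2 adj t k -> \prod_(x <- zip t k) zv x.1 x.2 = 'X_[zmnm_of t k].
Proof.
elim: t k => [|j t IH] [|k ks] //=; first by rewrite big_nil /zmnm_of big_nil mpolyX0.
case/andP => adj_jk adj_t; rewrite big_cons IH // zmnm_of_cons mpolyXD /=.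
by rewrite zvE zvarX -?surjective_pairing // -adjE.
Qed.

Lemma exists_zmnm_of_le t u : (forall j, count_mem j t <= side_mnm u j)%N ->
  exists k, all2 adj t k /\ (zmnm_of t k <= u)%MM.
Proof.
elim: t u => [|j t IH] u le_tu.
  by exists [::]; split => //; rewrite /zmnm_of big_nil; apply/mnm_lepP => i; rewrite mnm0E.
have : (0 < side_mnm u j)%N by apply: leq_trans (le_tu j); rewrite /= eqxx.
rewrite mnmE lt0n sum_nat_eq0 => /forall_inPn [i /eqP Ei ui0].
have le_iu : (U_(i) <= u)%MM by rewrite lep1mP.
have Eu : u = (U_(i) + (u - U_(i)))%MM by rewrite addmC submK.
have [k [adj_tk le_k]] : exists k, all2 adj t k /\ (zmnm_of t k <= u - U_(i))%MM.
  apply: IH => j'; have := le_tu j'; rewrite {1}Eu side_mnmD mnmDE side_mnmU mnm1E Ei /= eq_sym.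
  by case: (j' == j); rewrite ?add1n ?ltnS ?add0n.
exists (opp (zpair Q i) :: k); split.
  by rewrite /= adj_tk andbT adjE -Ei edge_side_opp zpair_in.
rewrite zmnm_of_cons -Ei edge_side_opp zmnm_zpair Eu; apply/mnm_lepP => l.
by rewrite !mnmDE leq_add2l; move/mnm_lepP: le_k.
Qed.

Lemma mweight_side_mnm (v : 'I_n -> R) u :
  wt v (side_mnm u) = \sum_(i < N) v (side (zpair Q i)) * (u i)%:R.
Proof.
rewrite /Defs.mweight (partition_big (fun i => side (zpair Q i)) predT) //=.
apply: eq_bigr => j _; rewrite mnmE natr_sum mulr_sumr.
by apply: eq_bigr => i /eqP <-.
Qed.

Lemma mweight_opp_mnm (v : 'I_p -> R) u :
  wt v (opp_mnm u) = \sum_(i < N) v (opp (zpair Q i)) * (u i)%:R.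
Proof.
rewrite /Defs.mweight (partition_big (fun i => opp (zpair Q i)) predT) //=.
apply: eq_bigr => k _; rewrite mnmE natr_sum mulr_sumr.
by apply: eq_bigr => i /eqP <-.
Qed.

Variables (wa : 'I_n -> R) (wb : 'I_p -> R) (w : 'I_N -> R) (eps : R) (om : 'I_N -> R).
Hypothesis omE : forall i, om i = wa (side (zpair Q i)) + wb (opp (zpair Q i)) + eps * w i.

Lemma mweight_om u : wt om u = wt wa (side_mnm u) + wt wb (opp_mnm u) + eps * wt w u.
Proof.
rewrite mweight_side_mnm mweight_opp_mnm /Defs.mweight mulr_sumr -!big_split /=.
by apply: eq_bigr => i _; rewrite omE !mulrDl mulrA.
Qed.

Section Lift.
Variables (f : {mpoly K[n]}) (ord : 'X_{1..n} -> seq 'I_n) (k : seq 'I_p).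
Hypothesis adj_ord : forall m, m \in msupp f -> all2 adj (ord m) k.

Lemma lift_elemE : lift_elem zv f ord k = \sum_(m <- msupp f) f@_m *: 'X_[zmnm_of (ord m) k].
Proof. by apply: eq_big_seq => m mf; rewrite prod_zv ?adj_ord. Qed.

Lemma msupp_lift_elem v : v \in msupp (lift_elem zv f ord k) ->
  exists2 m, m \in msupp f & v = zmnm_of (ord m) k.
Proof.
rewrite lift_elemE => /msupp_sum_le /flattenP [_ /mapP [m mf ->]].
by move/msuppZ_le; rewrite msuppX inE => /eqP ->; exists m; rewrite // filter_predT in mf.
Qed.

Lemma mcoeff_lift_elem m0 : (forall m, m \in msupp f -> repr_mono m (ord m)) ->
  m0 \in msupp f -> (lift_elem zv f ord k)@_(zmnm_of (ord m0) k) = f@_m0.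
Proof.
move=> repr_ord m0f; rewrite lift_elemE [in RHS](mpolyE f) !raddf_sum /=.
apply: eq_big_seq => m mf; rewrite !mcoeffZ !mcoeffX; congr (_ * (nat_of_bool _)%:R).
apply/eqP/eqP => [E | -> //].
rewrite (repr_mono_mnm_of_seq (repr_ord _ mf)) (repr_mono_mnm_of_seq (repr_ord _ m0f)).
by rewrite -(side_mnm_zmnm_of (adj_ord mf)) -(side_mnm_zmnm_of (adj_ord m0f)) E.
Qed.

End Lift.

Lemma lift_lead f ord m0 u :
  weakly_Q_homog adj wa f -> valid_order adj wa f ord ->
  eps_small wa (\sum_i `|w i|) f eps -> 0 < eps ->
  lead_mono wa f m0 -> (m0 <= side_mnm u)%MM ->
  exists k, [/\ Lift adj zv wa f ord (lift_elem zv f ord k),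
    (zmnm_of (ord m0) k <= u)%MM,
    lead_mono om (lift_elem zv f ord k) (zmnm_of (ord m0) k) &
    forall v, v \in msupp (lift_elem zv f ord k) -> mdeg v = mdeg (zmnm_of (ord m0) k)].
Proof.
move=> [d [_ [homf _]]] ord_f eps_f eps0 lead_f le_m0.
have [repr_ord adj_ord] := ord_f m0 lead_f; have m0f := proj1 lead_f.
have [k [adj_k le_k]] : exists k, all2 adj (ord m0) k /\ (zmnm_of (ord m0) k <= u)%MM.
  by apply: exists_zmnm_of_le => j; rewrite -(repr_ord _ m0f); move/mnm_lepP: le_m0.
have {}adj_ord := adj_ord k adj_k.
have mdeg_lift m : m \in msupp f -> mdeg (zmnm_of (ord m) k) = d.
  move=> mf; rewrite mdeg_zmnm_of ?adj_ord // -mdeg_mnm_of_seq.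
  by rewrite -(repr_mono_mnm_of_seq (repr_ord _ mf)) (dhomog_mf homf mf).
exists k; split; first by exists m0, k.
- exact: le_k.
- split; first by rewrite mcoeff_msupp mcoeff_lift_elem // (mcoeff_lead_neq0 lead_f).
  move=> _ /(msupp_lift_elem adj_ord) [m mf ->] ne.
  have ne_m : m != m0 by apply: contraNneq ne => ->.
  (* Both monomials have [opp]-part [k]: the [wa]-gap must beat the [eps * w] term. *)
  rewrite !mweight_om !side_mnm_zmnm_of ?opp_mnm_zmnm_of ?adj_ord //.
  rewrite -(repr_mono_mnm_of_seq (repr_ord _ mf)) -(repr_mono_mnm_of_seq (repr_ord _ m0f)).
  set Xm := wt w _; set X0 := wt w _; set D := d%:R *+ 2 * \sum_i `|w i|.
  have := eps_f m m0 mf m0f (proj2 lead_f m mf ne_m).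
  rewrite (dhomog_mf homf m0f) -/D => le_eps.
  have le_X : `|Xm - X0| <= D.
    apply: le_trans (ler_normB _ _) _; rewrite /D mulrnAl mulr2n.
    by apply: lerD; apply: le_trans (mweight_norm_le _ _) _; rewrite mdeg_lift.
  have := small_mul_lt eps0 (le_trans (normr_ge0 _) le_X) le_eps.
  have := ler_wpM2l (ltW eps0) (le_trans (ler_norm _) le_X).
  by move: (eps * D) => Y; rewrite mulrBr; lra.
- by move=> _ /(msupp_lift_elem adj_ord) [m mf ->]; rewrite !mdeg_lift.
Qed.

End LiftSide.

Arguments side_mnm {r s} Q {n} side u.
Arguments opp_mnm {r s} Q {p} opp u.

Lemma weakly_Q_homog_lead (K : fieldType) (R : realFieldType) n p
    (adj : 'I_n -> 'I_p -> bool) (v : 'I_n -> R) (f : {mpoly K[n]}) :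
  weakly_Q_homog adj v f -> exists d m0, f \is d.-homog /\ lead_mono v f m0.
Proof. by move=> [d [m0 [homf [lead_f _]]]]; exists d, m0. Qed.

Section LiftImage.
Variables (K : fieldType) (r s : nat) (Q : {set 'I_r * 'I_s}).

Lemma side_mnm_x u : side_mnm Q fst u = xpart (phi_mnm Q u).
Proof. by apply/mnmP => j; rewrite mnmE xpart_phi_mnm. Qed.

Lemma opp_mnm_x u : opp_mnm Q snd u = ypart (phi_mnm Q u).
Proof. by apply/mnmP => k; rewrite mnmE ypart_phi_mnm. Qed.

Lemma side_mnm_y u : side_mnm Q snd u = ypart (phi_mnm Q u).
Proof. by apply/mnmP => k; rewrite mnmE ypart_phi_mnm. Qed.

Lemma opp_mnm_y u : opp_mnm Q fst u = xpart (phi_mnm Q u).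
Proof. by apply/mnmP => j; rewrite mnmE xpart_phi_mnm. Qed.

Lemma phiQ_lift_x (f : {mpoly K[r]}) ord k :
  (forall m, m \in msupp f -> all2 (adjx Q) (ord m) k /\ repr_mono m (ord m)) ->
  phiQ Q (lift_elem (zvar Q) f ord k) = incl_x s f * 'X_[emby r (mnm_of_seq k)].
Proof.
move=> ord_f; rewrite (lift_elemE (edge := pair) (fun _ _ => erefl) (fun _ _ => erefl))
  => [|m /ord_f []//].
rewrite incl_xE mulr_suml /phiQ linear_sum; apply: eq_big_seq => m mf.
rewrite linearZ /= -/(phiQ Q _) phiQX -scalerAl -mpolyXD; congr (_ *: 'X_[_]).
have [adj_m repr_m] := ord_f m mf; rewrite [LHS]mnm_bisplit.
rewrite -side_mnm_x -opp_mnm_x (side_mnm_zmnm_of (side := fst) (edge := pair) _ _ adj_m) //.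
rewrite (opp_mnm_zmnm_of (opp := snd) (edge := pair) _ _ adj_m) //.
by rewrite -(repr_mono_mnm_of_seq repr_m).
Qed.

Lemma phiQ_lift_y (g : {mpoly K[s]}) ord k :
  (forall m, m \in msupp g -> all2 (adjy Q) (ord m) k /\ repr_mono m (ord m)) ->
  phiQ Q (lift_elem (zvar_y Q) g ord k) = incl_y r g * 'X_[embx s (mnm_of_seq k)].
Proof.
move=> ord_g; rewrite (lift_elemE (edge := fun k j => (j, k)) (fun _ _ => erefl)
  (fun _ _ => erefl)) => [|m /ord_g []//].
rewrite incl_yE mulr_suml /phiQ linear_sum; apply: eq_big_seq => m mg.
rewrite linearZ /= -/(phiQ Q _) phiQX -scalerAl -mpolyXD; congr (_ *: 'X_[_]).
have [adj_m repr_m] := ord_g m mg; rewrite [LHS]mnm_bisplit addmC.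
rewrite -side_mnm_y -opp_mnm_y.
rewrite (side_mnm_zmnm_of (side := snd) (edge := fun k j => (j, k)) _ _ adj_m) //.
rewrite (opp_mnm_zmnm_of (opp := fst) (edge := fun k j => (j, k)) _ _ adj_m) //.
by rewrite -(repr_mono_mnm_of_seq repr_m).
Qed.

End LiftImage.

Section FiberProductGroebner.
Variables (K : fieldType) (R : realFieldType) (r s : nat) (Q : {set 'I_r * 'I_s}).
Variables (I : {mpoly K[r]} -> Prop) (J : {mpoly K[s]} -> Prop).
Variables (w1 : 'I_r -> R) (w2 : 'I_s -> R) (F : seq {mpoly K[r]}) (G : seq {mpoly K[s]}).
Variables (w : 'I_#|Q| -> R) (ordF : {mpoly K[r]} -> 'X_{1..r} -> seq 'I_r)
  (ordG : {mpoly K[s]} -> 'X_{1..s} -> seq 'I_s).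
Hypotheses (idealI : is_ideal I) (idealJ : is_ideal J).
Hypotheses (gbI : groebner_basis w1 (fun f => f \in F) I)
  (gbJ : groebner_basis w2 (fun g => g \in G) J).
Hypotheses (wqF : forall f, f \in F -> weakly_Q_homog (adjx Q) w1 f)
  (wqG : forall g, g \in G -> weakly_Q_homog (adjy Q) w2 g).
Hypothesis gbQ : groebner_basis w (HQ (K := K) Q) (IQ (K := K) Q).
Hypotheses (ordF_valid : forall f, f \in F -> valid_order (adjx Q) w1 f (ordF f))
  (ordG_valid : forall g, g \in G -> valid_order (adjy Q) w2 g (ordG g)).
Variable eps : R.
Hypothesis eps_gt0 : 0 < eps.
Hypotheses (epsF : forall f, f \in F -> eps_small w1 (\sum_i `|w i|) f eps)
  (epsG : forall g, g \in G -> eps_small w2 (\sum_i `|w i|) g eps).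

Local Notation N := #|Q|.
Local Notation om := (omega' Q w1 w2 eps w).
Local Notation fiber := (fiber_prod (K := K) Q I J).
Let leadF f (fF : f \in F) := weakly_Q_homog_lead (wqF fF).
Let leadG g (gG : g \in G) := weakly_Q_homog_lead (wqG gG).

Definition fiber_gens (h : {mpoly K[N]}) : Prop :=
  (exists f, f \in F /\ Lift (adjx Q) (zvar (K := K) Q) w1 f (ordF f) h)
  \/ (exists g, g \in G /\ Lift (adjy Q) (zvar_y (K := K) Q) w2 g (ordG g) h)
  \/ HQ Q h.

Lemma mweight_omega' u :
  wt om u = wt w1 (xpart (phi_mnm Q u)) + wt w2 (ypart (phi_mnm Q u)) + eps * wt w u.
Proof. by rewrite (mweight_om (side := fst) (opp := snd) (fun=> erefl)) side_mnm_x opp_mnm_x. Qed.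

Lemma fiber_gens_in h : fiber_gens h -> fiber h.
Proof.
have [sum0 _ sumM] : is_ideal (sum_ideal I J) := is_ideal_gen _.
case=> [[f [fF [m0 [k [lead_f [adj_k ->]]]]]] | [[g [gG [m0 [k [lead_g [adj_k ->]]]]]] | hQ]].
- have [repr_ord adj_ord] := ordF_valid fF lead_f.
  rewrite /fiber_prod phiQ_lift_x => [|m mf]; last by split; [apply: adj_ord | apply: repr_ord].
  rewrite mulrC; apply: (sumM); apply: ideal_gen_in.
  by left; exists f; split => //; apply: (proj1 gbI).
- have [repr_ord adj_ord] := ordG_valid gG lead_g.
  rewrite /fiber_prod phiQ_lift_y => [|m mg]; last by split; [apply: adj_ord | apply: repr_ord].
  rewrite mulrC; apply: (sumM); apply: ideal_gen_in.
  by right; exists g; split => //; apply: (proj1 gbJ).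
- by rewrite /fiber_prod (proj1 gbQ _ hQ).
Qed.

(* Each [(c, a, g)] in [l] stands for the term [c z^a g]. *)
Definition std_rep (p : {mpoly K[N]}) (W : R) :=
  exists (l : seq (K * 'X_{1..N} * {mpoly K[N]})) (r0 : {mpoly K[N]}),
  [/\ forall x, x \in l -> fiber_gens x.2,
      forall x, x \in l -> forall m, m \in msupp ('X_[x.1.2] * x.2) -> wt om m <= W,
      forall m, m \in msupp r0 -> wt om m <= W /\ bistd_mono w1 w2 F G (phi_mnm Q m) &
      p = \sum_(x <- l) x.1.1 *: ('X_[x.1.2] * x.2) + r0].

Lemma std_rep_lin W : lin_closed (std_rep^~ W).
Proof.
split.
- by exists [::], 0; split => //; rewrite ?msupp0 ?big_nil ?addr0.
- move=> p q [l1 [r1 [gen1 le1 std1 ->]]] [l2 [r2 [gen2 le2 std2 ->]]].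
  exists (l1 ++ l2), (r1 + r2); split; last by rewrite big_cat addrACA.
  + by move=> x; rewrite mem_cat => /orP [/gen1 | /gen2].
  + by move=> x; rewrite mem_cat => /orP [/le1 | /le2].
  + by move=> m /msuppD_le; rewrite mem_cat => /orP [/std1 | /std2].
- move=> c p [l [r0 [genl lel std0 ->]]].
  exists [seq (c * x.1.1, x.1.2, x.2) | x <- l], (c *: r0); split.
  + by move=> _ /mapP [x xl ->]; exact: genl x xl.
  + by move=> _ /mapP [x xl ->]; exact: lel x xl.
  + by move=> m /msuppZ_le /std0.
  rewrite scalerDr big_map scaler_sumr; congr (_ + _).
  by apply: eq_bigr => x _; rewrite scalerA.
Qed.

Lemma std_rep_le p W W' : W <= W' -> std_rep p W -> std_rep p W'.
Proof.
move=> le_W [l [r0 [genl lel std0 ->]]]; exists l, r0; split => //.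
- by move=> x xl m mx; apply: le_trans le_W; apply: lel xl m mx.
- by move=> m /std0 [le_m std_m]; split => //; apply: le_trans le_W.
Qed.

Lemma std_rep_reduce u g Z0 : fiber_gens g -> (Z0 <= u)%MM -> lead_mono om g Z0 ->
  (forall v, v \in msupp g -> mdeg v = mdeg Z0) ->
  (forall v, mdeg v = mdeg u -> wt om v < wt om u -> std_rep 'X_[v] (wt om v)) ->
  std_rep 'X_[u] (wt om u).
Proof.
move=> gen_g le_Z0 lead_g mdeg_g IH; have [_ repD repZ] := std_rep_lin (wt om u).
rewrite -(submK le_Z0) (mpolyX_reduce _ (mcoeff_lead_neq0 lead_g)) submK //.
apply: repD.
  exists [:: ((g@_Z0)^-1, (u - Z0)%MM, g)], 0; rewrite big_seq1 addr0; split => //.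
  - by move=> x; rewrite inE => /eqP ->.
  - move=> x; rewrite inE => /eqP -> m /= /msuppXM [v vg ->].
    rewrite -[in X in _ <= X](submK le_Z0) !mweightD lerD2l.
    by have [-> // | ne] := eqVneq v Z0; apply/ltW/(proj2 lead_g).
  - by move=> m; rewrite msupp0.
rewrite -scaleNr; apply: (repZ); rewrite mulX_expand.
apply: (lin_closed_sum (std_rep_lin _)) => v vr _; apply: (repZ).
have [vg ne_v] := msupp_drop_term vr; have lt_v := proj2 lead_g v vg ne_v.
have lt_uv : wt om (u - Z0 + v)%MM < wt om u.
  by rewrite -[in X in _ < X](submK le_Z0) !mweightD ltrD2l.
apply: std_rep_le (ltW lt_uv) (IH _ _ lt_uv).
by rewrite -[in RHS](submK le_Z0) !mdegD (mdeg_g v vg).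
Qed.

Let pair_of_proj (q : 'I_r * 'I_s) : (q.1, q.2) = q. Proof. by case: q. Qed.
Let omega'_y i : om i = w2 (zpair Q i).2 + w1 (zpair Q i).1 + eps * w i.
Proof. by rewrite /omega' [w1 _ + _]addrC. Qed.

Let lift_lead_x := lift_lead (K := K) (side := fst) (opp := snd) (edge := pair)
  (adj := adjx Q) (zv := zvar Q) (wa := w1) (wb := w2) (w := w) (eps := eps) (om := om)
  (fun _ _ => erefl) (fun _ _ => erefl) pair_of_proj (fun _ _ => erefl) (fun _ _ => erefl)
  (fun _ => erefl).

Let lift_lead_y := lift_lead (K := K) (side := snd) (opp := fst) (edge := fun k j => (j, k))
  (adj := adjy Q) (zv := zvar_y Q) (wa := w2) (wb := w1) (w := w) (eps := eps) (om := om)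
  (fun _ _ => erefl) (fun _ _ => erefl) pair_of_proj (fun _ _ => erefl) (fun _ _ => erefl)
  omega'_y.

Lemma std_rep_mono u : std_rep 'X_[u] (wt om u).
Proof.
elim/(@mweight_ind _ _ om): u => u IH.
case: (classic (bistd_mono w1 w2 F G (phi_mnm Q u))) => [std_u | nstd_u].
  exists [::], 'X_[u]; rewrite big_nil add0r; split => // m.
  by rewrite msuppX inE => /eqP ->.
have [nstd_x | nstd_y] :
    ~ std_mono w1 F (xpart (phi_mnm Q u)) \/ ~ std_mono w2 G (ypart (phi_mnm Q u)).
  by apply: NNPP => both; apply: nstd_u; split; apply: NNPP => ?; apply: both; [left | right].
- have [f [m0 [fF lead_f]]] := not_std_mono nstd_x; rewrite -side_mnm_x => le_m0.
  have [k [lift_k le_k lead_k mdeg_k]] :=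
    lift_lead_x (wqF fF) (ordF_valid fF) (epsF fF) eps_gt0 lead_f le_m0.
  by apply: (std_rep_reduce _ le_k lead_k mdeg_k IH); left; exists f.
- have [g [m0 [gG lead_g]]] := not_std_mono nstd_y; rewrite -side_mnm_y => le_m0.
  have [k [lift_k le_k lead_k mdeg_k]] :=
    lift_lead_y (wqG gG) (ordG_valid gG) (epsG gG) eps_gt0 lead_g le_m0.
  by apply: (std_rep_reduce _ le_k lead_k mdeg_k IH); right; left; exists g.
Qed.

Lemma std_rep_all p W : (forall m, m \in msupp p -> wt om m <= W) -> std_rep p W.
Proof.
move=> le_p; apply: (lin_closed_mpoly (std_rep_lin W)) => m mp.
exact: std_rep_le (le_p m mp) (std_rep_mono m).
Qed.

Local Notation init_gens :=
  (ideal_gen (fun q => exists h : {mpoly K[N]}, fiber_gens h /\ q = in_w om h)).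

Lemma mweight_omega'_fiber u e : phi_mnm Q u = e ->
  wt om u = wt w1 (xpart e) + wt w2 (ypart e) + eps * wt w u.
Proof. by move=> <-; apply: mweight_omega'. Qed.

Lemma in_w_omega'_fiber (f : {mpoly K[N]}) e :
  (forall m, m \in msupp f -> phi_mnm Q m = e) -> in_w om f = in_w w f.
Proof.
move=> fiber_f; apply/mpolyP => m; rewrite !mcoeff_in_w.
have [mf | mNf] := boolP (m \in msupp f); last by rewrite (memN_msupp_eq0 mNf) !if_same.
congr (if _ then _ else _); apply: eq_in_all => m' m'f /=.
by rewrite !(mweight_omega'_fiber (fiber_f _ _)) // lerD2l ler_pM2l.
Qed.

Lemma wpart_omega'_fiber (f : {mpoly K[N]}) e W :
  (forall m, m \in msupp f -> phi_mnm Q m = e) ->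
  wpart om W f = wpart w ((W - (wt w1 (xpart e) + wt w2 (ypart e))) / eps) f.
Proof.
move=> fiber_f; apply/mpolyP => m; rewrite !mcoeff_wpart.
have [mf | mNf] := boolP (m \in msupp f); last by rewrite (memN_msupp_eq0 mNf) !if_same.
rewrite (mweight_omega'_fiber (fiber_f _ mf)); congr (if _ then _ else _).
by apply/eqP/eqP => [<- | ->]; field; rewrite gt_eqF.
Qed.

Lemma init_IQ_wpart (p : {mpoly K[N]}) W :
  IQ Q p -> (forall m, m \in msupp p -> wt om m <= W) -> init_gens (wpart om W p).
Proof.
move=> IQp le_W; have linI : lin_closed init_gens := is_ideal_lin (is_ideal_gen _).
rewrite [p]fiber_comp_sum linear_sum; apply: (lin_closed_sum linI) => e _ _.
set pe := fiber_comp p e; have fiber_pe m : m \in msupp pe -> phi_mnm Q m = e.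
  exact: msupp_fiber_comp.
rewrite /= (wpart_omega'_fiber W fiber_pe); set V := (_ / eps).
have le_V m : m \in msupp pe -> wt w m <= V.
  move=> m_pe; rewrite ler_pdivlMr // mulrC lerBrDl -(mweight_omega'_fiber (fiber_pe _ m_pe)).
  by apply: le_W; move: m_pe; rewrite !mcoeff_msupp mcoeff_fiber_comp; case: ifP; rewrite ?eqxx.
have [-> | ->] := wpart_bounded le_V; first by case: linI.
have : init_ideal w (IQ Q) (in_w w pe).
  by apply: ideal_gen_in; exists pe; split => //; apply: IQ_fiber_comp.
move/(proj2 gbQ); apply: ideal_gen_min (is_ideal_gen _) _ => _ [h [hQ ->]].
apply: ideal_gen_in; exists h; split; first by right; right.
by have [e' fiber_h] := HQ_phi_homog hQ; rewrite (in_w_omega'_fiber fiber_h).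
Qed.

Lemma init_fiber_prod p : fiber p -> init_gens (in_w om p).
Proof.
have [gen0 genD genM] : is_ideal init_gens := is_ideal_gen _.
have gen_lin : lin_closed init_gens := is_ideal_lin (is_ideal_gen _).
have fiberI := fiber_prod_is_ideal (K := K) Q I J; have fiber_lin := is_ideal_lin fiberI.
move=> fiber_p; have [-> | p0] := eqVneq p 0; first by rewrite in_w0.
have [W [le_W ->]] := in_w_eq_wpart om p0.
have [l [r0 [genl lel std0 Ep]]] := std_rep_all le_W.
have fiber_r0 : fiber r0.
  rewrite (_ : r0 = p - \sum_(x <- l) x.1.1 *: ('X_[x.1.2] * x.2)); last first.
    by rewrite Ep addrC addKr.
  apply: (lin_closedB fiber_lin) => //; apply: (lin_closed_sum fiber_lin) => x xl _.
  case: fiber_lin => _ _; apply; case: fiberI => _ _; apply.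
  exact/fiber_gens_in/genl.
have IQ_r0 : IQ Q r0.
  apply: (sum_ideal_bistd_eq0 idealI idealJ gbI gbJ leadF leadG fiber_r0) => u.
  rewrite phiQE => /msupp_sum_le /flattenP [_ /mapP [m m_r0 ->]] /msuppZ_le.
  rewrite msuppX inE => /eqP ->; rewrite filter_predT in m_r0.
  exact: (proj2 (std0 m m_r0)).
rewrite Ep linearD linear_sum /=; apply: genD; last first.
  by apply: init_IQ_wpart => // m /std0 [].
apply: (lin_closed_sum gen_lin) => x xl _; rewrite linearZ /= wpartXM.
case: gen_lin => _ _; apply.
have le_x m : m \in msupp x.2 -> wt om m <= W - wt om x.1.2.
  move=> mx; rewrite lerBrDl -mweightD; apply: lel xl _ _.
  by rewrite mpoly_mulC (perm_mem (msuppMX _ _)) map_f.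
have [-> | ->] := wpart_bounded le_x; first by rewrite mulr0.
by apply: genM; apply: ideal_gen_in; exists x.2; split => //; apply: genl.
Qed.

Theorem fiber_prod_groebner : groebner_basis om fiber_gens fiber.
Proof.
split=> [|p]; first exact: fiber_gens_in.
split.
  by apply: ideal_gen_min (is_ideal_gen _) _ => _ [f [fiber_f ->]]; apply: init_fiber_prod.
apply: ideal_gen_min (is_ideal_gen _) _ => _ [g [gen_g ->]].
by apply: ideal_gen_in; exists g; split => //; apply: fiber_gens_in.
Qed.

End FiberProductGroebner.

Section EpsChoice.
Variables (K : fieldType) (R : realFieldType) (n : nat) (v : 'I_n -> R) (B : R).
Hypothesis B_ge0 : 0 <= B.

Lemma eps_small_le (f : {mpoly K[n]}) e e' :
  e' <= e -> eps_small v B f e -> eps_small v B f e'.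
Proof. by move=> le_e small_e m m' mf m'f lt_m; apply: le_trans le_e (small_e _ _ _ _ _). Qed.

Lemma exists_pos_lb (l : seq R) :
  (forall x, x \in l -> 0 < x) -> exists2 e, 0 < e & forall x, x \in l -> e <= x.
Proof.
elim: l => [|x l IH] pos_l; first by exists 1.
have [e e0 le_e] := IH (fun y yl => pos_l y (@mem_behead _ (x :: l) _ yl)).
exists (Num.min x e); first by rewrite lt_min pos_l ?mem_head.
by move=> y; rewrite inE => /orP [/eqP -> | /le_e]; rewrite ge_min ?lexx // => ->; rewrite orbT.
Qed.

Lemma exists_eps_small_poly (f : {mpoly K[n]}) : exists2 e, 0 < e & eps_small v B f e.
Proof.
pose gap mm := (wt v mm.2 - wt v mm.1) / ((mdeg mm.2)%:R *+ 2 * B + 1).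
pose pairs := [seq mm <- [seq (m, m') | m <- msupp f, m' <- msupp f] | wt v mm.1 < wt v mm.2].
have [|e e0 le_e] := exists_pos_lb (l := map gap pairs).
  move=> x /mapP [mm]; rewrite mem_filter => /andP [lt_mm _] ->.
  by rewrite divr_gt0 ?subr_gt0 // ltr_wpDl ?mulr_ge0 ?mulrn_wge0.
exists e => // m m' mf m'f lt_m; apply: (le_e (gap (m, m'))).
by apply: map_f; rewrite mem_filter lt_m; apply/allpairsP; exists (m, m').
Qed.

Lemma exists_eps_small (F : seq {mpoly K[n]}) :
  exists2 e, 0 < e & forall f, f \in F -> eps_small v B f e.
Proof.
elim: F => [|f F [e e0 small_F]]; first by exists 1.
have [e' e'0 small_f] := exists_eps_small_poly f.
exists (Num.min e e'); first by rewrite lt_min e0.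
move=> g; rewrite inE => /orP [/eqP -> | /small_F small_g].
  by apply: eps_small_le small_f; rewrite ge_min lexx orbT.
by apply: eps_small_le small_g; rewrite ge_min lexx.
Qed.

End EpsChoice.

Theorem corollary3p8 (K : fieldType) (R : realFieldType) (r s : nat)
  (Q : {set 'I_r * 'I_s})
  (I : {mpoly K[r]} -> Prop) (J : {mpoly K[s]} -> Prop)
  (w1 : 'I_r -> R) (w2 : 'I_s -> R)
  (F : seq {mpoly K[r]}) (G : seq {mpoly K[s]})
  (w : 'I_#|Q| -> R)
  (ordF : {mpoly K[r]} -> 'X_{1..r} -> seq 'I_r)
  (ordG : {mpoly K[s]} -> 'X_{1..s} -> seq 'I_s) :
  homog_ideal I -> homog_ideal J ->
  groebner_basis w1 (fun f => f \in F) I ->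
  groebner_basis w2 (fun g => g \in G) J ->
  (forall f, f \in F -> weakly_Q_homog (adjx Q) w1 f) ->
  (forall g, g \in G -> weakly_Q_homog (adjy Q) w2 g) ->
  groebner_basis w (HQ (K := K) Q) (IQ (K := K) Q) ->
  (* the orderings of the monomials used to define the lifts *)
  (forall f, f \in F -> valid_order (adjx Q) w1 f (ordF f)) ->
  (forall g, g \in G -> valid_order (adjy Q) w2 g (ordG g)) ->
  exists eps : R, 0 < eps /\
    groebner_basis (omega' Q w1 w2 eps w)
      (fun h => (exists f, f \in F /\
                   Lift (adjx Q) (zvar (K := K) Q) w1 f (ordF f) h)
             \/ (exists g, g \in G /\
                   Lift (adjy Q) (zvar_y (K := K) Q) w2 g (ordG g) h)
             \/ HQ Q h)
      (fiber_prod Q I J).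
Proof.
move=> /homog_ideal_is_ideal idealI /homog_ideal_is_ideal idealJ gbI gbJ wqF wqG gbQ
  ordF_valid ordG_valid.
have B_ge0 : 0 <= \sum_i `|w i| by apply: sumr_ge0.
have [e1 e1_gt0 epsF] := exists_eps_small w1 B_ge0 F.
have [e2 e2_gt0 epsG] := exists_eps_small w2 B_ge0 G.
have eps_gt0 : 0 < Num.min e1 e2 by rewrite lt_min e1_gt0.
exists (Num.min e1 e2); split => //; apply: fiber_prod_groebner => //.
- by move=> f /epsF; apply: eps_small_le; rewrite ge_min lexx.
- by move=> g /epsG; apply: eps_small_le; rewrite ge_min lexx orbT.
Qed.
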